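(* Consider a discounted MDP with finite state space $\mathcal{S}$, finite action space $\mathcal{A}$, reward vector $r\in\mathbb{R}^{|\mathcal{S}||\mathcal{A}|}$, transition matrix $P\in\mathbb{R}_+^{|\mathcal{S}||\mathcal{A}|\times|\mathcal{S}|}$ with $P_{sa,\tilde s}=\Pr(\tilde s\mid s,a)$, initial state distribution $\mu_0$, and discount factor $\gamma\in[0,1)$. Let $\theta\mapsto\pi_\theta$ be a differentiable parametrized policy, and let $q_\phi\in\mathbb{R}^{|\mathcal{S}||\mathcal{A}|}$ be an arbitrary critic vector (not depending on $\theta$). Define $J(\theta)=(1-\gamma)\mu_0^\top\Pi_\theta q_\theta$, $J_\pi(\theta,\phi)=(1-\gamma)\mu_0^\top\Pi_\theta q_\phi$, the critic residual $\delta_{\theta,\phi}=r-(I-\gamma P\Pi_\theta)q_\phi$, and $\nabla^\phi_\theta J=\sum_s d_{\mathcal{S},\theta}(s)\sum_a q_\phi(s,a)\nabla_\theta\pi_\theta(s,a)$. Then $$\nabla_\theta J-\partial_\theta J_\pi=\nabla_\theta\Big(\sum_{s,a} d_\theta(s,a)\,\delta_{\theta,\phi}(s,a)\Big),$$ where the derivative on the right acts on both $d_\theta$ and $\delta_{\theta,\phi}$ (with $q_\phi$ fixed), and $$\nabla_\theta J-\nabla^\phi_\theta J=\sum_{s,a}\nabla_\theta d_\theta(s,a)\,\delta_{\theta,\phi}(s,a),$$ i.e. the derivative of $\mathbb{E}_{(S,A)\sim d_\theta}[\delta_{\theta,\phi}(S,A)]$ taken only through $d_\theta$, with $\delta_{\theta,\phi}$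 held fixed.
   Context: The policy $\pi_\theta$ is a vector in $\mathbb{R}_+^{|\mathcal{S}||\mathcal{A}|}$ with entries $\pi_\theta(s,a)$, normalized in each state. $\Pi_\theta\in\mathbb{R}^{|\mathcal{S}|\times|\mathcal{S}||\mathcal{A}|}$ is the block-diagonal matrix whose row $s$ contains $\pi_\theta(s,\cdot)^\top$ in the block of state $s$ and zeros elsewhere, so $(\Pi_\theta v)(s)=\sum_a\pi_\theta(s,a)v(s,a)$. $q_\theta=\sum_{i\ge0}(\gamma P\Pi_\theta)^i r$ is the state-action value function of $\pi_\theta$. $d_\theta(s,a)=(1-\gamma)\sum_{i\ge0}\gamma^i\Pr(S_i=s,A_i=a)$ is the discounted state-action visitation distribution when $S_0\sim\mu_0$, actions follow $\pi_\theta$ and transitions follow $P$; $d_{\mathcal{S},\theta}(s)=\sum_a d_\theta(s,a)$. $\partial_\theta J_\pi$ denotes the gradient of $J_\pi$ in $\theta$ with $q_\phi$ held fixed. *)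

From HB Require Import structures.
From mathcomp Require Import all_boot all_order all_algebra.
From mathcomp Require Import all_classical all_reals all_analysis.
Set Implicit Arguments. Unset Strict Implicit. Unset Printing Implicit Defensive.
Import Order.TTheory GRing.Theory Num.Theory.
Import numFieldNormedType.Exports.
Local Open Scope ring_scope.

Section MDP.
Variables (R : realType) (S A : finType) (n : nat).
(* transition kernel P s a s' = Pr(s' | s, a), discount gamma, reward r,
   initial distribution mu0; a parametrized policy pi theta s a. *)
Variables (P : S -> A -> S -> R) (gamma : R) (r : S -> A -> R) (mu0 : S -> R).
Variable (pi : 'rV[R]_n -> S -> A -> R).

Definition PiOp (th : 'rV[R]_n) (v : S -> A -> R) : S -> R :=
  fun s => \sum_(a : A) pi th s a * v s a.

Definition gPPi (th : 'rV[R]_n) (v : S -> A -> R) : S -> A -> R :=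
  fun s a => gamma * \sum_(s' : S) P s a s' * PiOp th v s'.

Definition qfun (th : 'rV[R]_n) : S -> A -> R :=
  fun s a => limn (series (fun i => iter i (gPPi th) r s a)).

(* state marginal of S_i: mu_0 and mu_{i+1}(s') = sum_{s,a} mu_i(s) pi(s,a) P(s,a,s') *)
Definition stmarg (th : 'rV[R]_n) (i : nat) : S -> R :=
  iter i (fun mu s' => \sum_(s : S) \sum_(a : A) mu s * pi th s a * P s a s') mu0.

Definition dfun (th : 'rV[R]_n) : S -> A -> R :=
  fun s a => (1 - gamma) * limn (series (fun i => gamma ^+ i * (stmarg th i s * pi th s a))).

Definition dSfun (th : 'rV[R]_n) : S -> R := fun s => \sum_(a : A) dfun th s a.

Definition Jfun (th : 'rV[R]_n) : R :=
  (1 - gamma) * \sum_(s : S) mu0 s * PiOp th (qfun th) s.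

Definition Jpi (qphi : S -> A -> R) (th : 'rV[R]_n) : R :=
  (1 - gamma) * \sum_(s : S) mu0 s * PiOp th qphi s.

Definition delta (qphi : S -> A -> R) (th : 'rV[R]_n) : S -> A -> R :=
  fun s a => r s a - (qphi s a - gPPi th qphi s a).
End MDP.

Definition grad (R : realType) (n : nat) (f : 'rV[R]_n -> R) (th : 'rV[R]_n)
  : 'rV[R]_n := \row_(i < n) ('D_(delta_mx 0 i) f th).

(* Write d for the discounted visitation distribution.  Its state marginal
   obeys the flow equation d_S = (1 - gamma) mu0 + gamma (P Pi)^T d, so that for
   every critic x the expected Bellman residual E_d[x - gamma P Pi x] telescopes
   to (1 - gamma) mu0^T Pi x.  Taking x = q_theta (whose residual is r) and
   x = q_phi yields J - J_pi = E_d[delta], whose gradient is the first identity.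
   For the second, differentiate E_d[delta] as a product: every quantity except
   d is affine in pi, and the part of the derivative through delta is again an
   expected residual, now with dpi in place of pi, which combines with the
   derivative of J_pi into sum_s d_S(s) sum_a q_phi(s,a) dpi(s,a).  That d itself
   is differentiable follows from d_S = (1 - gamma) mu0^T (I - gamma K)^-1, where
   the stochastic state kernel K makes I - gamma K invertible. *)

From HB Require Import structures.
From mathcomp Require Import all_boot all_order all_algebra.
From mathcomp Require Import all_classical all_reals all_analysis.
From mathcomp Require Import ring.
Import Order.TTheory GRing.Theory Num.Theory.
Import numFieldNormedType.Exports.
Set Implicit Arguments. Unset Strict Implicit. Unset Printing Implicit Defensive.
Local Open Scope classical_set_scope.
Local Open Scope ring_scope.

Section BigDerive.
Context {R : numFieldType} {V : normedModType R} (x v : V).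

Lemma is_derive_bigsum {W : normedModType R} (I : Type) (s : seq I)
    (h : I -> V -> W) (dh : I -> W) :
  (forall i, is_derive x v (h i) (dh i)) ->
  is_derive x v (fun y => \sum_(i <- s) h i y) (\sum_(i <- s) dh i).
Proof.
move=> hd; rewrite -fct_sumE.
by elim/big_ind2: _ => // *; [exact: is_derive_cst | exact: is_deriveD].
Qed.

Lemma is_deriveMl (f : V -> R) (df c : R) :
  is_derive x v f df -> is_derive x v (fun y => c * f y) (c * df).
Proof. exact: is_deriveZ. Qed.

Lemma is_deriveMr (f : V -> R) (df c : R) :
  is_derive x v f df -> is_derive x v (fun y => f y * c) (df * c).
Proof. by move=> fd; rewrite mulrC; under eq_fun do rewrite mulrC; exact: is_deriveZ. Qed.

Lemma derivable_bigsum {W : normedModType R} (I : Type) (s : seq I)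
    (h : I -> V -> W) :
  (forall i, derivable (h i) x v) -> derivable (fun y => \sum_(i <- s) h i y) x v.
Proof.
move=> hd; rewrite -fct_sumE.
by elim/big_ind: _ => // *; exact: derivableD.
Qed.

Lemma derivable_bigprod (I : Type) (s : seq I) (h : I -> V -> R) :
  (forall i, derivable (h i) x v) -> derivable (fun y => \prod_(i <- s) h i y) x v.
Proof.
move=> hd; rewrite -fct_prodE.
by elim/big_ind: _ => // *; exact: derivableM.
Qed.

Lemma derivable_det k (M : V -> 'M[R]_k) :
  (forall i j, derivable (fun y => M y i j) x v) ->
  derivable (fun y => \det (M y)) x v.
Proof.
move=> dM; apply: derivable_bigsum => s.
by apply: derivableM; [exact: derivable_cst | exact: derivable_bigprod].
Qed.

Lemma derivable_invmx k (M : V -> 'M[R]_k) :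
  (forall y, M y \in unitmx) -> (forall i j, derivable (fun y => M y i j) x v) ->
  forall i j, derivable (fun y => invmx (M y) i j) x v.
Proof.
move=> Munit dM i j.
have -> : (fun y => invmx (M y) i j) =
    (fun y => (\det (M y))^-1 * ((-1) ^+ (j + i) * \det (row' j (col' i (M y))))).
  by apply: funext => y; rewrite /invmx Munit !mxE.
apply: derivableM.
  apply: derivableV; first by rewrite -unitfE -unitmxE.
  exact: derivable_det.
apply: derivableM; first exact: derivable_cst.
by apply: derivable_det => a b; under eq_fun do rewrite !mxE; exact: dM.
Qed.

Lemma derivable_row_solution k (A : V -> 'M[R]_k) (b : 'rV[R]_k) (u : V -> 'rV[R]_k) :
  (forall y, A y \in unitmx) -> (forall y, u y *m A y = b) ->
  (forall i j, derivable (fun y => A y i j) x v) ->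
  forall j, derivable (fun y => u y 0 j) x v.
Proof.
move=> Aunit uA dA j.
have -> : (fun y => u y 0 j) = (fun y => \sum_i b 0 i * invmx (A y) i j).
  by apply: funext => y; rewrite -[u y](mulmxK (Aunit y)) uA mxE.
apply: derivable_bigsum => i.
by apply: derivableM; [exact: derivable_cst | exact: derivable_invmx].
Qed.

End BigDerive.

Lemma unitmx_sub_scale_stochastic (R : realFieldType) k (K : 'M[R]_k) (c : R) :
  (forall i j, 0 <= K i j) -> (forall i, \sum_j K i j = 1) -> 0 <= c < 1 ->
  1%:M - c *: K \in unitmx.
Proof.
move=> K_ge0 K_sum1 /andP[c_ge0 c_lt1].
rewrite unitmxE unitfE; apply/negP => /det0P[w /eqP w_neq0 wK]; apply: w_neq0.
have w_fix : w = c *: (w *m K).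
  by apply/eqP; move/eqP: wK; rewrite mulmxBr mulmx1 -scalemxAr subr_eq0.
have l1_contract : \sum_j `|w 0 j| <= c * \sum_j `|w 0 j|.
  rewrite {1}w_fix; under eq_bigr do rewrite mxE normrM ger0_norm // mxE.
  rewrite -mulr_sumr ler_wpM2l //.
  apply: (@le_trans _ _ (\sum_j \sum_i `|w 0 i| * K i j)).
    apply: ler_sum => j _; apply: le_trans (ler_norm_sum _ _ _) _.
    by apply: ler_sum => i _; rewrite normrM (ger0_norm (K_ge0 _ _)).
  by rewrite exchange_big; under eq_bigr do rewrite -mulr_sumr K_sum1 mulr1.
have l1_eq0 : \sum_j `|w 0 j| = 0.
  have gap : 0 < 1 - c by rewrite subr_gt0.
  apply/eqP; rewrite eq_le sumr_ge0 ?andbT // -(pmulr_rle0 _ gap).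
  by rewrite mulrBl mul1r subr_le0.
by apply/rowP => j; rewrite mxE; apply/normr0_eq0; move/psumr_eq0P: l1_eq0 => ->.
Qed.

Lemma sum_enum_val (T : finType) (V : nmodType) (F : T -> V) :
  \sum_t F t = \sum_(i < #|T|) F (enum_val i).
Proof. exact: (reindex _ (onW_bij _ (@enum_val_bij T))). Qed.

Lemma recurrence_limit_fixpoint (R : realType) (T : finType)
    (u : T -> nat -> R) (l b : T -> R) (w : T -> T -> R) :
  (forall t, u t @ \oo --> l t) ->
  (forall t N, u t N.+1 = b t + \sum_t' w t t' * u t' N) ->
  forall t, l t = b t + \sum_t' w t t' * l t'.
Proof.
move=> u_cvg u_rec t; apply: (cvg_unique _ (u_cvg t)); first exact: Rhausdorff.
rewrite /= -cvg_shiftS; under eq_fun do rewrite u_rec.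
apply: cvgD; first exact: cvg_cst.
apply: cvg_big => // [|t' _]; first exact: add_continuous.
exact: cvgMl_tmp.
Qed.

Section MDP.
Variables (R : realType) (S A : finType) (n : nat).
Variables (P : S -> A -> S -> R) (gamma : R) (r : S -> A -> R) (mu0 : S -> R).
Variable pi : 'rV[R]_n -> S -> A -> R.
Hypothesis P_ge0 : forall s a s', 0 <= P s a s'.
Hypothesis P_sum1 : forall s a, \sum_s' P s a s' = 1.
Hypothesis mu0_ge0 : forall s, 0 <= mu0 s.
Hypothesis mu0_sum1 : \sum_s mu0 s = 1.
Hypothesis gamma_ge0 : 0 <= gamma.
Hypothesis gamma_lt1 : gamma < 1.
Hypothesis pi_ge0 : forall th s a, 0 <= pi th s a.
Hypothesis pi_sum1 : forall th s, \sum_a pi th s a = 1.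

Local Notation marg := (stmarg P mu0 pi).
Local Notation d := (dfun P gamma mu0 pi).
Local Notation dS := (dSfun P gamma mu0 pi).
Local Notation q := (qfun P gamma r pi).

Lemma stmargS th i s' :
  marg th i.+1 s' = \sum_s \sum_a marg th i s * pi th s a * P s a s'.
Proof. by rewrite /stmarg iterS. Qed.

Lemma stmarg_ge0 th i s : 0 <= marg th i s.
Proof.
elim: i s => [|i IH] s; first exact: mu0_ge0.
by rewrite stmargS; do 2!apply: sumr_ge0 => ? _; rewrite !mulr_ge0.
Qed.

Lemma sum_stmarg th i : \sum_s marg th i s = 1.
Proof.
elim: i => [|i IH]; first exact: mu0_sum1.
under eq_bigr do rewrite stmargS.
rewrite exchange_big -IH; apply: eq_bigr => s _.
rewrite exchange_big -[RHS]mulr1 -(pi_sum1 th s) mulr_sumr; apply: eq_bigr => a _.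
by rewrite -mulr_sumr P_sum1 mulr1.
Qed.

Lemma stmarg_le1 th i s : marg th i s <= 1.
Proof.
rewrite -(sum_stmarg th i) (bigD1 s) //= lerDl.
by apply: sumr_ge0 => *; exact: stmarg_ge0.
Qed.

Definition occupancy th s := limn (series (fun i => gamma ^+ i * marg th i s)).

Lemma cvg_occupancy th s :
  series (fun i => gamma ^+ i * marg th i s) @ \oo --> occupancy th s.
Proof.
apply: (@series_le_cvg _ _ (geometric 1 gamma)).
- by move=> i; rewrite mulr_ge0 ?exprn_ge0 ?stmarg_ge0.
- by move=> i; rewrite /geometric /= mul1r exprn_ge0.
- by move=> i; rewrite /geometric /= mul1r ler_piMr ?exprn_ge0 ?stmarg_le1.
- by apply: is_cvg_geometric_series; rewrite ger0_norm.
Qed.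

Lemma occupancy_flow th s' : occupancy th s' =
  mu0 s' + \sum_s (gamma * \sum_a pi th s a * P s a s') * occupancy th s.
Proof.
apply: (recurrence_limit_fixpoint (b := mu0)
  (w := fun s' s => gamma * \sum_a pi th s a * P s a s') (@cvg_occupancy th)) => {}s' N.
rewrite !seriesEnat /= big_nat_recl // expr0 mul1r; congr (_ + _).
under [RHS]eq_bigr do rewrite seriesEnat /= mulr_sumr.
rewrite exchange_big /=; apply: eq_bigr => i _.
rewrite exprS !mulr_sumr; apply: eq_bigr => s _.
rewrite !mulr_sumr mulr_suml; apply: eq_bigr => a _; ring.
Qed.

Lemma dfunE th s a : d th s a = (1 - gamma) * occupancy th s * pi th s a.
Proof.
rewrite /dfun -mulrA; congr (_ * _); apply: cvg_lim; first exact: Rhausdorff.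
have -> : series (fun i => gamma ^+ i * (marg th i s * pi th s a)) =
    (fun N => series (fun i => gamma ^+ i * marg th i s) N * pi th s a).
  by apply: funext => N; rewrite !seriesEnat /= mulr_suml; under eq_bigr do rewrite mulrA.
apply: cvgMr_tmp; exact: cvg_occupancy.
Qed.

Lemma dSfunE th s : dS th s = (1 - gamma) * occupancy th s.
Proof. by rewrite /dSfun; under eq_bigr do rewrite dfunE; rewrite -mulr_sumr pi_sum1 mulr1. Qed.

Lemma dfun_dSfun th s a : d th s a = dS th s * pi th s a.
Proof. by rewrite dfunE dSfunE. Qed.

Lemma dSfun_flow th s' :
  dS th s' = (1 - gamma) * mu0 s' + gamma * \sum_s \sum_a d th s a * P s a s'.
Proof.
rewrite dSfunE occupancy_flow mulrDr; congr (_ + _).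
rewrite !mulr_sumr; apply: eq_bigr => s _.
rewrite !mulr_sumr mulr_suml mulr_sumr; apply: eq_bigr => a _; rewrite dfunE; ring.
Qed.

Lemma gPPiE (pi' : 'rV[R]_n -> S -> A -> R) th (x : S -> A -> R) s a :
  gPPi P gamma pi' th x s a =
  \sum_(p : S * A) gamma * P s a p.1 * pi' th p.1 p.2 * x p.1 p.2.
Proof.
rewrite /gPPi /PiOp mulr_sumr; under eq_bigr do rewrite !mulr_sumr.
by rewrite pair_bigA; apply: eq_bigr => -[s' a'] _; rewrite !mulrA.
Qed.

Lemma gPPi_norm_le th x b s a :
  (forall s a, `|x s a| <= b) -> `|gPPi P gamma pi th x s a| <= gamma * b.
Proof.
move=> x_le; rewrite /gPPi normrM ger0_norm // ler_wpM2l //.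
apply: le_trans (ler_norm_sum _ _ _) _.
apply: (@le_trans _ _ (\sum_s' P s a s' * b)); last by rewrite -mulr_suml P_sum1 mul1r.
apply: ler_sum => s' _; rewrite normrM ger0_norm // ler_wpM2l //.
apply: le_trans (ler_norm_sum _ _ _) _.
apply: (@le_trans _ _ (\sum_a' pi th s' a' * b)); last by rewrite -mulr_suml pi_sum1 mul1r.
by apply: ler_sum => a' _; rewrite normrM ger0_norm // ler_wpM2l.
Qed.

Definition reward_bound := \sum_s \sum_a `|r s a|.

Lemma reward_bound_ge0 : 0 <= reward_bound.
Proof. by do 2!apply: sumr_ge0 => ? _. Qed.

Lemma iter_gPPi_norm_le th i s a :
  `|iter i (gPPi P gamma pi th) r s a| <= gamma ^+ i * reward_bound.
Proof.
elim: i s a => [|i IH] s a; last by rewrite iterS exprS -mulrA; exact: gPPi_norm_le.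
rewrite expr0 mul1r /reward_bound (bigD1 s) //= (bigD1 a) //= -addrA lerDl.
by apply: addr_ge0; do ?apply: sumr_ge0 => *.
Qed.

Lemma cvg_qfun th s a :
  series (fun i => iter i (gPPi P gamma pi th) r s a) @ \oo --> q th s a.
Proof.
apply: normed_cvg; apply: (@series_le_cvg _ _ (geometric reward_bound gamma)).
- by move=> i; exact: normr_ge0.
- by move=> i; rewrite /geometric /= mulr_ge0 ?exprn_ge0 ?reward_bound_ge0.
- by move=> i; rewrite /geometric /= mulrC; exact: iter_gPPi_norm_le.
- by apply: is_cvg_geometric_series; rewrite ger0_norm.
Qed.

Lemma qfun_bellman th s a : q th s a = r s a + gPPi P gamma pi th (q th) s a.
Proof.
have := recurrence_limit_fixpoint (l := fun p : S * A => q th p.1 p.2)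
  (b := fun p => r p.1 p.2)
  (w := fun p p' => gamma * P p.1 p.2 p'.1 * pi th p'.1 p'.2)
  (fun p => @cvg_qfun th p.1 p.2).
move=> /(_ _ (s, a)) /= -> => [|[s' a'] N]; first by rewrite gPPiE.
rewrite !seriesEnat /= big_nat_recl //=; congr (_ + _).
under eq_bigr do rewrite gPPiE; under [RHS]eq_bigr do rewrite seriesEnat /= mulr_sumr.
exact: exchange_big.
Qed.

Lemma sum_dfun_gPPi th (pi' : 'rV[R]_n -> S -> A -> R) th' x :
  \sum_s \sum_a d th s a * gPPi P gamma pi' th' x s a =
  \sum_s (dS th s - (1 - gamma) * mu0 s) * PiOp pi' th' x s.
Proof.
transitivity (\sum_s' \sum_s \sum_a gamma * d th s a * P s a s' * PiOp pi' th' x s').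
  rewrite [RHS]exchange_big; apply: eq_bigr => s _.
  rewrite [RHS]exchange_big; apply: eq_bigr => a _.
  by rewrite /gPPi !mulr_sumr; apply: eq_bigr => s' _; ring.
apply: eq_bigr => s' _; rewrite dSfun_flow addrAC subrr add0r -mulrA mulr_suml mulr_sumr.
apply: eq_bigr => s _; rewrite mulr_suml mulr_sumr; apply: eq_bigr => a _; ring.
Qed.

Lemma sum_dfun_mul th x :
  \sum_s \sum_a d th s a * x s a = \sum_s dS th s * PiOp pi th x s.
Proof.
apply: eq_bigr => s _; rewrite /PiOp mulr_sumr.
by apply: eq_bigr => a _; rewrite dfun_dSfun mulrA.
Qed.

Lemma Jpi_sum_dfun th x :
  Jpi gamma mu0 pi x th = \sum_s \sum_a d th s a * (x s a - gPPi P gamma pi th x s a).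
Proof.
under eq_bigr do under eq_bigr do rewrite mulrBr.
under eq_bigr do rewrite sumrB.
rewrite sumrB sum_dfun_mul sum_dfun_gPPi -sumrB /Jpi mulr_sumr.
by apply: eq_bigr => s _; ring.
Qed.

Lemma Jfun_sub_Jpi qphi th :
  Jfun P gamma r mu0 pi th - Jpi gamma mu0 pi qphi th =
  \sum_s \sum_a d th s a * delta P gamma r pi qphi th s a.
Proof.
have -> : Jfun P gamma r mu0 pi th = Jpi gamma mu0 pi (q th) th by [].
rewrite !Jpi_sum_dfun -sumrB.
apply: eq_bigr => s _; rewrite -sumrB; apply: eq_bigr => a _.
by rewrite -mulrBr /delta {1}qfun_bellman addrK.
Qed.

Definition state_kernel th : 'M[R]_#|S| :=
  \matrix_(i, j) \sum_a pi th (enum_val i) a * P (enum_val i) a (enum_val j).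

Lemma state_kernel_ge0 th i j : 0 <= state_kernel th i j.
Proof. by rewrite mxE; apply: sumr_ge0 => a _; rewrite mulr_ge0. Qed.

Lemma state_kernel_sum1 th i : \sum_j state_kernel th i j = 1.
Proof.
under eq_bigr do rewrite mxE.
rewrite exchange_big /= -(pi_sum1 th (enum_val i)); apply: eq_bigr => a _.
by rewrite -mulr_sumr -sum_enum_val P_sum1 mulr1.
Qed.

Definition dSrow th : 'rV[R]_#|S| := \row_j dS th (enum_val j).

Lemma dSrow_flow th : dSrow th *m (1%:M - gamma *: state_kernel th) =
  (1 - gamma) *: \row_j mu0 (enum_val j).
Proof.
apply/rowP => j; rewrite !mxE.
under eq_bigr do rewrite !mxE mulrBr mulrnAr mulr1.
rewrite sumrB (bigD1 j) //= eqxx big1 => [|i /negbTE]; last by rewrite eq_sym => ->.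
rewrite addr0 (dSfun_flow th (enum_val j)) mulr1n -addrA.
rewrite [X in _ + X](_ : _ = 0) ?addr0 //; apply/eqP; rewrite subr_eq0; apply/eqP.
rewrite sum_enum_val mulr_sumr; apply: eq_bigr => i _.
rewrite [RHS]mulrCA; congr (_ * _); rewrite mulr_sumr.
by apply: eq_bigr => a _; rewrite dfun_dSfun mulrA.
Qed.

Lemma derivable_dfun th v :
  (forall s a, derivable (fun y => pi y s a) th v) ->
  forall s a, derivable (fun y => d y s a) th v.
Proof.
move=> pi_derivable s a; under eq_fun do rewrite dfun_dSfun; apply: derivableM => //.
have -> : (fun y => dS y s) = (fun y => dSrow y 0 (enum_rank s)).
  by apply: funext => y; rewrite mxE enum_rankK.
apply: (derivable_row_solution _ dSrow_flow) => [y|i j].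
  by apply: unitmx_sub_scale_stochastic; rewrite ?gamma_ge0 ?gamma_lt1 //;
    [exact: state_kernel_ge0 | exact: state_kernel_sum1].
under eq_fun do rewrite !mxE.
apply: derivableB; first exact: derivable_cst.
apply: derivableM; first exact: derivable_cst.
by apply: derivable_bigsum => a'; apply: derivableM => //; exact: derivable_cst.
Qed.

Section PolicyDerivative.
Variables (th v : 'rV[R]_n) (dpi : S -> A -> R).
Hypothesis pi_is_derive : forall s a, is_derive th v (fun y => pi y s a) (dpi s a).
(* [dpi] as a constant policy: the derivative of each quantity that is affine in
   the policy is that quantity evaluated at [Dpi]. *)
Local Notation Dpi := (fun _ : 'rV[R]_n => dpi).

Lemma is_derive_PiOp x s : is_derive th v (fun y => PiOp pi y x s) (PiOp Dpi th x s).
Proof. by apply: is_derive_bigsum => a; exact: is_deriveMr. Qed.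

Lemma is_derive_gPPi x s a :
  is_derive th v (fun y => gPPi P gamma pi y x s a) (gPPi P gamma Dpi th x s a).
Proof.
apply: is_deriveMl; apply: is_derive_bigsum => s'.
by apply: is_deriveMl; exact: is_derive_PiOp.
Qed.

Lemma is_derive_delta qphi s a :
  is_derive th v (fun y => delta P gamma r pi qphi y s a) (gPPi P gamma Dpi th qphi s a).
Proof.
have -> : (fun y => delta P gamma r pi qphi y s a) =
    (fun y => (r s a - qphi s a) + gPPi P gamma pi y qphi s a).
  by apply: funext => y; rewrite /delta opprB addrCA addrC.
rewrite -[gPPi _ _ _ th _ _ _]add0r.
by apply: is_deriveD; exact: is_derive_gPPi.
Qed.

Lemma is_derive_Jpi qphi :
  is_derive th v (Jpi gamma mu0 pi qphi) (Jpi gamma mu0 Dpi qphi th).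
Proof.
rewrite /Jpi; apply: is_deriveMl; apply: is_derive_bigsum => s.
by apply: is_deriveMl; exact: is_derive_PiOp.
Qed.

Variable qphi : S -> A -> R.

Lemma is_derive_sum_dfun_delta :
  is_derive th v (fun y => \sum_s \sum_a d y s a * delta P gamma r pi qphi y s a)
    (\sum_s \sum_a (d th s a * gPPi P gamma Dpi th qphi s a +
                   delta P gamma r pi qphi th s a * 'D_v (fun y => d y s a) th)).
Proof.
have pi_derivable s a : derivable (fun y => pi y s a) th v by exact: ex_derive.
apply: is_derive_bigsum => s; apply: is_derive_bigsum => a.
apply: is_deriveM; last exact: is_derive_delta.
exact/derivableP/derivable_dfun.
Qed.

Lemma is_derive_Jfun :
  is_derive th v (Jfun P gamma r mu0 pi)
    (\sum_s \sum_a (d th s a * gPPi P gamma Dpi th qphi s a +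
                   delta P gamma r pi qphi th s a * 'D_v (fun y => d y s a) th)
     + Jpi gamma mu0 Dpi qphi th).
Proof.
have -> : Jfun P gamma r mu0 pi = (fun y =>
    \sum_s \sum_a d y s a * delta P gamma r pi qphi y s a + Jpi gamma mu0 pi qphi y).
  by apply: funext => y; rewrite -Jfun_sub_Jpi subrK.
apply: is_deriveD; [exact: is_derive_sum_dfun_delta | exact: is_derive_Jpi].
Qed.

Lemma derive_Jfun_sub_Jpi :
  'D_v (Jfun P gamma r mu0 pi) th - 'D_v (Jpi gamma mu0 pi qphi) th =
  'D_v (fun y => \sum_s \sum_a d y s a * delta P gamma r pi qphi y s a) th.
Proof.
rewrite (derive_val (is_derive := is_derive_Jfun)).
rewrite (derive_val (is_derive := is_derive_Jpi qphi)).
by rewrite (derive_val (is_derive := is_derive_sum_dfun_delta)) addrK.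
Qed.

Lemma derive_Jfun_sub_policy_gradient :
  'D_v (Jfun P gamma r mu0 pi) th - \sum_s dS th s * \sum_a qphi s a * dpi s a =
  \sum_s \sum_a delta P gamma r pi qphi th s a * 'D_v (fun y => d y s a) th.
Proof.
rewrite (derive_val (is_derive := is_derive_Jfun)).
under eq_bigr do rewrite big_split; rewrite big_split /= sum_dfun_gPPi.
have -> : \sum_s dS th s * \sum_a qphi s a * dpi s a =
    \sum_s (dS th s - (1 - gamma) * mu0 s) * PiOp Dpi th qphi s +
    Jpi gamma mu0 Dpi qphi th.
  rewrite /Jpi mulr_sumr -big_split; apply: eq_bigr => s _ /=.
  under eq_bigr do rewrite mulrC; rewrite /PiOp; ring.
ring.
Qed.

End PolicyDerivative.
End MDP.

Theorem theorem1 (R : realType) (S A : finType) (n : nat)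
  (P : S -> A -> S -> R) (gamma : R) (r : S -> A -> R) (mu0 : S -> R)
  (pi : 'rV[R]_n -> S -> A -> R) (qphi : S -> A -> R) :
  (forall s a s', 0 <= P s a s') ->
  (forall s a, \sum_(s' : S) P s a s' = 1) ->
  (forall s, 0 <= mu0 s) -> \sum_(s : S) mu0 s = 1 ->
  0 <= gamma -> gamma < 1 ->
  (forall th s a, 0 <= pi th s a) ->
  (forall th s, \sum_(a : A) pi th s a = 1) ->
  (forall th s a, differentiable (fun th' => pi th' s a) th) ->
  forall th : 'rV[R]_n,
    grad (Jfun P gamma r mu0 pi) th - grad (Jpi gamma mu0 pi qphi) th
      = grad (fun th' => \sum_(s : S) \sum_(a : A)
                 dfun P gamma mu0 pi th' s a * delta P gamma r pi qphi th' s a) th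
 /\ grad (Jfun P gamma r mu0 pi) th
      - \sum_(s : S) dSfun P gamma mu0 pi th s *:
          \sum_(a : A) qphi s a *: grad (fun th' => pi th' s a) th
      = \sum_(s : S) \sum_(a : A)
          delta P gamma r pi qphi th s a *: grad (fun th' => dfun P gamma mu0 pi th' s a) th.
Proof.
move=> P_ge0 P_sum1 mu0_ge0 mu0_sum1 gamma_ge0 gamma_lt1 pi_ge0 pi_sum1 pi_diff th.
have pi_is_derive v s a : is_derive th v (fun y => pi y s a) ('D_v (fun y => pi y s a) th).
  exact/derivableP/diff_derivable.
split; apply/rowP => i; rewrite !mxE.
  exact: derive_Jfun_sub_Jpi.
rewrite !summxE; under eq_bigr do rewrite mxE summxE.
under eq_bigr do under eq_bigr do rewrite !mxE.
under [RHS]eq_bigr do rewrite summxE; under [RHS]eq_bigr do under eq_bigr do rewrite !mxE.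
exact: derive_Jfun_sub_policy_gradient.
Qed.
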